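(* Let $n\ge3$, let $\overrightarrow{C_n}$ be an oriented cycle and $D$ a distance set of $\overrightarrow{C_n}$ with $\min(D)\ge2$. If $\overrightarrow{C_n}$ is $D$-antimagic, then $\overrightarrow{C_n}$ is unidirectional.
   Context: An oriented graph is a simple graph each of whose edges is given one direction (an arc $(u,v)$ goes from $u$ to $v$). For vertices $u,v$, $d(u,v)$ is the length of a shortest directed path from $u$ to $v$ ($d(u,u)=0$, $\infty$ if no path). A distance set of an oriented graph is a nonempty set $D$ of nonnegative integers each of which is a finite distance $d(u,v)$ for some pair of vertices. $N_D(v)=\{y : d(v,y)\in D\}$; for a bijection $f:V\to\{1,\dots,|V|\}$, $\omega_D(v)=\sum_{x\in N_D(v)}f(x)$ (empty sum $0$); $f$ is $D$-antimagic if distinct vertices have distinct $D$-weights, and the graph is $D$-antimagic if such an $f$ exists. An oriented cycle $\overrightarrow{C_n}$ is an orientation of the cycle on $v_1,\dots,v_n$. It is unidirectional if (up to relabeling) its arcs are $(v_i,v_{i+1})$, $1\le i\le n-1$, and $(v_n,v_1)$. *)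

From mathcomp Require Import all_boot.
Set Implicit Arguments. Unset Strict Implicit. Unset Printing Implicit Defensive.

Fixpoint reach_in (T : finType) (arc : rel T) (k : nat) (u v : T) : bool :=
  match k with
  | 0 => u == v
  | k'.+1 => [exists w, arc u w && reach_in arc k' w v]
  end.

(* [dist_eq arc u v k] : d(u,v) = k, i.e. k is the length of a shortest
   directed path from u to v (shortest walks and shortest paths agree). *)
Definition dist_eq (T : finType) (arc : rel T) (u v : T) (k : nat) : bool :=
  reach_in arc k u v && [forall m : 'I_k, ~~ reach_in arc m u v].

Definition distance_set (T : finType) (arc : rel T) (D : pred nat) : Prop :=
  (exists k, D k) /\ (forall k, D k -> exists u v, dist_eq arc u v k).

(* N_D(v) as a boolean predicate on vertices.  Finite distances are < #|T|,
   so restricting k to 'I_#|T|.+1 loses nothing. *)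
Definition in_ND (T : finType) (arc : rel T) (D : pred nat) (v y : T) : bool :=
  [exists k : 'I_#|T|.+1, D k && dist_eq arc v y k].

Definition D_weight (T : finType) (arc : rel T) (D : pred nat) (f : T -> nat)
  (v : T) : nat := \sum_(y : T | in_ND arc D v y) f y.

Definition labelling (T : finType) (f : T -> nat) : Prop :=
  injective f /\ (forall x, 1 <= f x <= #|T|).

Definition D_antimagic_labelling (T : finType) (arc : rel T) (D : pred nat)
  (f : T -> nat) : Prop :=
  labelling f /\ injective (D_weight arc D f).

Definition D_antimagic (T : finType) (arc : rel T) (D : pred nat) : Prop :=
  exists f : T -> nat, D_antimagic_labelling arc D f.

(* An oriented cycle on vertices v_0, ..., v_{n-1} (= 'I_n, in cyclic order):
   the edge {i, i+1 mod n} is oriented i -> i+1 if o i, and i+1 -> i otherwise. *)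
Definition cyc_arc (n : nat) (o : 'I_n -> bool) : rel 'I_n :=
  fun u v => (o u && (v == ordS u)) || (~~ o v && (u == ordS v)).

Definition unidirectional (n : nat) (arc : rel 'I_n) : Prop :=
  exists p : 'I_n -> 'I_n, bijective p /\
    forall x y : 'I_n, arc x y = (p y == ordS (p x)).

From mathcomp Require Import all_boot zify.
Set Implicit Arguments. Unset Strict Implicit. Unset Printing Implicit Defensive.

(* Since min D >= 2, a vertex v with no directed walk of length 2 from v has
   N_D(v) empty, hence D-weight 0; an antimagic labelling therefore allows at
   most one such "dead end".  If the cycle is not unidirectional it has a sink
   s, which is a dead end, and looking at the two arcs next to the ones
   entering s yields a second dead end: either a neighbour of s whose only
   out-arc enters s, or another sink further along the cycle. *)

Definition dead_end (T : finType) (arc : rel T) (v : T) : Prop :=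
  forall w, arc v w -> forall z, ~~ arc w z.

Lemma D_weight_dead_end (T : finType) (arc : rel T) (D : pred nat)
    (f : T -> nat) (v : T) :
  (forall k, D k -> 2 <= k) -> dead_end arc v -> D_weight arc D f v = 0.
Proof.
move=> D_ge2 dead_v; rewrite /D_weight big_pred0 // => y.
apply/negbTE/existsP=> -[k /andP[Dk /andP[reach_k _]]].
move: (D_ge2 _ Dk) reach_k; case: (nat_of_ord k) => [|[|k']] //= _.
case/existsP=> w /andP[vw /existsP[z /andP[wz _]]].
by move: (dead_v w vw z); rewrite wz.
Qed.

Lemma D_antimagic_dead_end_unique (T : finType) (arc : rel T) (D : pred nat)
    (f : T -> nat) (u v : T) :
  (forall k, D k -> 2 <= k) -> D_antimagic_labelling arc D f ->
  dead_end arc u -> dead_end arc v -> u = v.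
Proof.
move=> D_ge2 [_ weight_inj] dead_u dead_v; apply: weight_inj.
by rewrite !(D_weight_dead_end f D_ge2).
Qed.

Lemma exists_flip (b : nat -> bool) (N : nat) :
  b 0 -> ~~ b N -> exists2 m, m < N & b m && ~~ b m.+1.
Proof.
elim: N => [-> //|N IH] b0 bN.
have [bN'|nbN'] := boolP (b N); first by exists N; rewrite ?bN' ?bN.
by have [m ltmN bm] := IH b0 nbN'; exists m; first exact: ltnW.
Qed.

Lemma rev_ordS (n : nat) (y : 'I_n) : rev_ord (ordS y) = ord_pred (rev_ord y).
Proof.
apply: val_inj => /=; have y_lt_n := ltn_ord y.
have [lt|ge] := ltnP y.+1 n.
  rewrite (modn_small lt).
  have -> : (n - y.+1 + n).-1 = (n - y.+2) + n by lia.
  by rewrite modnDr modn_small //; lia.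
have -> : y.+1 = n by lia.
by rewrite modnn subnn add0n modn_small //; lia.
Qed.

Section OrientedCycle.

Variables (n : nat) (o : 'I_n -> bool).
Local Notation arc := (cyc_arc o).
Local Notation shift m x := (iter m (@ordS n) x).

Lemma val_iter_ordS (m : nat) (x : 'I_n) : val (shift m x) = (x + m) %% n.
Proof.
elim: m => [|m IH] /=; first by rewrite addn0 modn_small.
by rewrite IH /= -addn1 modnDml addn1 addnS.
Qed.

Lemma iter_ordS_eq (x : 'I_n) (a b : nat) :
  a < n -> b < n -> (shift a x == shift b x) = (a == b).
Proof.
move=> lt_an lt_bn; rewrite -val_eqE /= !val_iter_ordS.
by rewrite eqn_modDl !modn_small.
Qed.

Lemma iter_ordS_n (x : 'I_n) : shift n x = x.
Proof. by apply: val_inj; rewrite val_iter_ordS modnDr modn_small. Qed.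

Lemma iter_ordS_pred (x : 'I_n) : shift n.-1 x = ord_pred x.
Proof.
apply: ordS_inj; rewrite ord_predK -iterS prednK ?iter_ordS_n //.
exact: leq_ltn_trans (ltn_ord x).
Qed.

Lemma iter_ordS_onto (x y : 'I_n) : exists m, shift m x = y.
Proof.
exists (y + n - x); apply: val_inj; rewrite val_iter_ordS.
have ltxn := ltn_ord x; have ltyn := ltn_ord y.
have -> : x + (y + n - x) = y + n by lia.
by rewrite modnDr modn_small.
Qed.

Lemma cyc_arc_out (u w : 'I_n) :
  arc u w -> (o u && (w == ordS u)) || (~~ o (ord_pred u) && (w == ord_pred u)).
Proof.
case/orP=> [-> //|/andP[ow /eqP ->]].
by rewrite ordSK ow eqxx orbT.
Qed.

Section Sink.

(* Arcs k -> k+1 and k+2 -> k+1: the vertex ordS k is a sink. *)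
Variable k : 'I_n.
Hypotheses (ok : o k) (nos : ~~ o (ordS k)).

Lemma sink_no_arc (z : 'I_n) : ~~ arc (ordS k) z.
Proof. by apply/negP=> /cyc_arc_out; rewrite (negbTE nos) ordSK ok. Qed.

Lemma sink_dead_end : dead_end arc (ordS k).
Proof. by move=> w; rewrite (negbTE (sink_no_arc w)). Qed.

Lemma dead_end_before_sink : o (ord_pred k) -> dead_end arc k.
Proof.
move=> opk w /cyc_arc_out; rewrite opk ok orbF => /eqP ->.
exact: sink_no_arc.
Qed.

Lemma dead_end_after_sink : ~~ o (shift 2 k) -> dead_end arc (shift 2 k).
Proof.
move=> noss w /cyc_arc_out; rewrite (negbTE noss) /= ordSK (negbTE nos) /=.
by move=> /eqP ->; exact: sink_no_arc.
Qed.

(* If neither neighbouring arc points towards the sink, the orientation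
   flips from forward to backward somewhere between them: a second sink. *)
Lemma second_sink : 3 <= n -> o (shift 2 k) -> ~~ o (ord_pred k) ->
  exists2 j, o j && ~~ o (ordS j) & ordS j != ordS k.
Proof.
move=> n_ge3 oss nopk.
have end_flip : ~~ o (shift (n - 3) (shift 2 k)).
  by rewrite -iterD (_ : n - 3 + 2 = n.-1) ?iter_ordS_pred //; lia.
have [m lt_m flip] := @exists_flip (fun m => o (shift m (shift 2 k))) _ oss end_flip.
exists (shift m (shift 2 k)) => //.
apply/eqP=> /ordS_inj; rewrite -iterD -[k in _ = k]/(shift 0 k).
by move/eqP; rewrite iter_ordS_eq //; lia.
Qed.

End Sink.

Lemma two_dead_ends (k : 'I_n) : 3 <= n -> o k -> ~~ o (ordS k) ->
  exists u v, [/\ u != v, dead_end arc u & dead_end arc v].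
Proof.
move=> n_ge3 ok nos; have ordS_neq (x : 'I_n) : ordS x != x.
  by rewrite -[x in _ != x]/(shift 0 x) -[ordS x]/(shift 1 x) iter_ordS_eq //; lia.
have [opk|nopk] := boolP (o (ord_pred k)).
  exists k, (ordS k); split; last exact: sink_dead_end.
  - by rewrite eq_sym ordS_neq.
  - exact: dead_end_before_sink.
have [oss|noss] := boolP (o (shift 2 k)).
  have [j /andP[oj nosj] neq] := second_sink ok nos n_ge3 oss nopk.
  by exists (ordS j), (ordS k); split => //; exact: sink_dead_end.
exists (ordS k), (shift 2 k); split; first by rewrite eq_sym ordS_neq.
  exact: sink_dead_end.
exact: dead_end_after_sink.
Qed.

Lemma orientation_constant_no_sink :
  (forall k, ~~ (o k && ~~ o (ordS k))) -> forall i j, o i -> o j.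
Proof.
move=> no_sink i j oi; apply: contraT => noj.
have [m eq_j] := iter_ordS_onto i j.
have end_flip : ~~ o (shift m i) by rewrite eq_j.
have [l _ flip] := @exists_flip (fun l => o (shift l i)) _ oi end_flip.
by move: (no_sink (shift l i)); rewrite flip.
Qed.

Lemma unidirectional_forward : (forall i, o i) -> unidirectional arc.
Proof.
move=> fwd; exists id; split; first exact: (Bijective (frefl _) (frefl _)).
by move=> x y; rewrite /cyc_arc fwd (fwd y) orbF.
Qed.

Lemma unidirectional_backward : (forall i, ~~ o i) -> unidirectional arc.
Proof.
move=> bwd; exists (@rev_ord n); split.
  exact: (Bijective (@rev_ordK n) (@rev_ordK n)).
move=> x y; rewrite /cyc_arc (negbTE (bwd x)) bwd /=.
rewrite -(inj_eq (@rev_ord_inj n)) rev_ordS eq_sym.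
by apply/eqP/eqP=> [<-|->]; rewrite ?ord_predK ?ordSK.
Qed.

End OrientedCycle.

Theorem mainTheorem6 (n : nat) (o : 'I_n -> bool) (D : pred nat) :
  3 <= n ->
  distance_set (cyc_arc o) D ->
  (forall k, D k -> 2 <= k) ->
  D_antimagic (cyc_arc o) D ->
  unidirectional (cyc_arc o).
Proof.
move=> n_ge3 _ D_ge2 [f antimagic].
have no_sink (k : 'I_n) : ~~ (o k && ~~ o (ordS k)).
  apply/andP=> -[ok nos].
  have [u [v [neq_uv dead_u dead_v]]] := two_dead_ends n_ge3 ok nos.
  have eq_uv := D_antimagic_dead_end_unique D_ge2 antimagic dead_u dead_v.
  by rewrite eq_uv eqxx in neq_uv.
have [/existsP[i oi]|/existsPn bwd] := boolP [exists i, o i].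
  by apply: unidirectional_forward => j; exact: orientation_constant_no_sink oi.
exact: unidirectional_backward.
Qed.
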